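(* The language $\mathcal{L}_{AIL}$ is strictly more expressive than $\mathcal{L}_{FH}$, i.e. $\mathcal{L}_{FH}\prec\mathcal{L}_{AIL}$: (i) for every $\varphi\in\mathcal{L}_{FH}$ there is $\psi\in\mathcal{L}_{AIL}$ such that for every epistemic model with awareness $M$ and every world $w$ of $M$, $M,w\vDash_{FH}\varphi$ iff $M,w\vDash_{AIL}\psi$; and (ii) it is not the case that for every $\psi\in\mathcal{L}_{AIL}$ there is $\varphi\in\mathcal{L}_{FH}$ with $M,w\vDash_{AIL}\psi$ iff $M,w\vDash_{FH}\varphi$ for all $M,w$.
   Context: Let $\mathcal{P}$ be a countable set of atomic propositions and $\mathcal{G}$ a finite set of agents. An epistemic model with awareness is $M=\langle W,\{\sim_i,\mathscr{A}_i\}_{i\in\mathcal{G}},V\rangle$ where $W\neq\emptyset$, each $\sim_i$ is an equivalence relation on $W$, each $\mathscr{A}_i:W\to 2^{\mathcal{P}}$ satisfies $\mathscr{A}_i(w)=\mathscr{A}_i(v)$ whenever $(w,v)\in\sim_i$, and $V:\mathcal{P}\to 2^W$. The A-equivalence relation $\approx_i$ on $W$: $(w,v)\in\approx_i$ iff $\mathscr{A}_i(w)=\mathscr{A}_i(v)$ and for every $p\in\mathscr{A}_i(w)$, $w\in V(p)$ iff $v\in V(p)$. The composition $\sim_i\circ\approx_i$ is $\{(w,v):\exists t\,((w,t)\in\approx_i\text{ and }(t,v)\in\sim_i)\}$ and $R^+$ denotes the transitive closure of $R$. The language $\mathcal{L}_{AIL}$ is given by $\varphi::=p\mid\neg\varphi\mid\varphi\wedge\varphi\mid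 A_i\varphi\mid I_i\varphi\mid E_i\varphi\mid[\approx]_i\varphi\mid[\circ^+]_i\varphi$ ($p\in\mathcal{P}$, $i\in\mathcal{G}$); $\mathcal{L}_{FH}$ is the fragment without $[\approx]_i$ and $[\circ^+]_i$. Let $At(\varphi)$ be the set of atoms occurring in $\varphi$. Satisfaction $\vDash_{AIL}$: $M,w\vDash p$ iff $w\in V(p)$; Boolean clauses as usual; $M,w\vDash A_i\varphi$ iff $At(\varphi)\subseteq\mathscr{A}_i(w)$; $M,w\vDash I_i\varphi$ iff $M,v\vDash\varphi$ for all $v$ with $(w,v)\in\sim_i$; $M,w\vDash[\approx]_i\varphi$ iff $M,v\vDash\varphi$ for all $v$ with $(w,v)\in\approx_i$; $M,w\vDash[\circ^+]_i\varphi$ iff $M,v\vDash\varphi$ for all $v$ with $(w,v)\in(\sim_i\circ\approx_i)^+$; $M,w\vDash E_i\varphi$ iff $M,w\vDash A_i\varphi$ and $M,w\vDash[\circ^+]_i\varphi$. Satisfaction $\vDash_{FH}$ on $\mathcal{L}_{FH}$ is defined identically except $M,w\vDash_{FH}E_i\varphi$ iff $M,w\vDash_{FH}A_i\varphi$ and $M,w\vDash_{FH}I_i\varphi$. *)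

From Stdlib Require Import List Relations.
From mathcomp Require Import all_boot.
Import ListNotations.

Unset Implicit Arguments.
Unset Strict Implicit.
Unset Printing Implicit Defensive.

Definition prop_atom := nat.

Record model (G : Type) := Model {
  world : Type;
  world_inhabited : inhabited world;
  sim : G -> world -> world -> Prop;
  aw : G -> world -> prop_atom -> Prop;
  val : prop_atom -> world -> Prop;
  sim_equiv : forall i, equivalence world (sim i);
  aw_sim : forall i w v, sim i w v -> forall p, aw i w p <-> aw i v p
}.
Arguments world {G}.
Arguments sim {G}.
Arguments aw {G}.
Arguments val {G}.

Section Rel.
Variables (G : Type) (M : model G).

Definition aeq (i : G) (w v : world M) : Prop :=
  (forall p, aw M i w p <-> aw M i v p) /\
  (forall p, aw M i w p -> (val M p w <-> val M p v)).

(* ~_i ∘ ≈_i  =  {(w,v) | exists t, w ≈_i t /\ t ~_i v} *)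
Definition comp_rel (i : G) (w v : world M) : Prop :=
  exists t, aeq i w t /\ sim M i t v.

Definition comp_plus (i : G) : relation (world M) := clos_trans _ (comp_rel i).
End Rel.
Arguments aeq {G M}.
Arguments comp_rel {G M}.
Arguments comp_plus {G M}.

Inductive form (G : Type) : Type :=
  | Atom : prop_atom -> form G
  | Neg : form G -> form G
  | And : form G -> form G -> form G
  | Aw : G -> form G -> form G
  | Inf : G -> form G -> form G
  | Exp : G -> form G -> form G
  | BoxA : G -> form G -> form G
  | BoxC : G -> form G -> form G.

Inductive fform (G : Type) : Type :=
  | FAtom : prop_atom -> fform G
  | FNeg : fform G -> fform G
  | FAnd : fform G -> fform G -> fform G
  | FAw : G -> fform G -> fform G
  | FInf : G -> fform G -> fform G
  | FExp : G -> fform G -> fform G.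

Fixpoint atoms (G : Type) (f : form G) : list prop_atom :=
  match f with
  | Atom p => [p]
  | Neg a => atoms G a
  | And a b => atoms G a ++ atoms G b
  | Aw _ a | Inf _ a | Exp _ a | BoxA _ a | BoxC _ a => atoms G a
  end.

Fixpoint fatoms (G : Type) (f : fform G) : list prop_atom :=
  match f with
  | FAtom p => [p]
  | FNeg a => fatoms G a
  | FAnd a b => fatoms G a ++ fatoms G b
  | FAw _ a | FInf _ a | FExp _ a => fatoms G a
  end.

Arguments Atom {G}. Arguments Neg {G}. Arguments And {G}. Arguments Aw {G}.
Arguments Inf {G}. Arguments Exp {G}. Arguments BoxA {G}. Arguments BoxC {G}.
Arguments FAtom {G}. Arguments FNeg {G}. Arguments FAnd {G}. Arguments FAw {G}.
Arguments FInf {G}. Arguments FExp {G}.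

Fixpoint sat (G : Type) (M : model G) (w : world M) (f : form G) : Prop :=
  match f with
  | Atom p => val M p w
  | Neg a => ~ sat G M w a
  | And a b => sat G M w a /\ sat G M w b
  | Aw i a => forall p, In p (atoms G a) -> aw M i w p
  | Inf i a => forall v, sim M i w v -> sat G M v a
  | Exp i a => (forall p, In p (atoms G a) -> aw M i w p) /\
               (forall v, comp_plus i w v -> sat G M v a)
  | BoxA i a => forall v, aeq i w v -> sat G M v a
  | BoxC i a => forall v, comp_plus i w v -> sat G M v a
  end.

Fixpoint fsat (G : Type) (M : model G) (w : world M) (f : fform G) : Prop :=
  match f with
  | FAtom p => val M p w
  | FNeg a => ~ fsat G M w a
  | FAnd a b => fsat G M w a /\ fsat G M w b
  | FAw i a => forall p, In p (fatoms G a) -> aw M i w p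
  | FInf i a => forall v, sim M i w v -> fsat G M v a
  | FExp i a => (forall p, In p (fatoms G a) -> aw M i w p) /\
                (forall v, sim M i w v -> fsat G M v a)
  end.

Arguments atoms {G}.
Arguments fatoms {G}.
Arguments sat {G} M w f.
Arguments fsat {G} M w f.

(* [E_i] of FH is [A_i] together with [I_i], so FH embeds into AIL by a
   compositional translation.  Conversely, [[≈]_i p] is not FH-definable:
   take a one-world model where [p] holds and a two-world model in which [p]
   holds at one world only and the epistemic relations are identity.  With
   no awareness at all, every two worlds are A-equivalent, so [[≈]_i p] holds
   in the first model but fails in the second, while FH formulas, which only
   move along [~_i], cannot tell the two pointed models apart. *)

From mathcomp Require Import all_boot.
From Stdlib Require Import List Relations.

Fixpoint fh_to_ail {G : Type} (f : fform G) : form G :=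
  match f with
  | FAtom p => Atom p
  | FNeg a => Neg (fh_to_ail a)
  | FAnd a b => And (fh_to_ail a) (fh_to_ail b)
  | FAw i a => Aw i (fh_to_ail a)
  | FInf i a => Inf i (fh_to_ail a)
  | FExp i a => And (Aw i (fh_to_ail a)) (Inf i (fh_to_ail a))
  end.

Lemma atoms_fh_to_ail {G : Type} (f : fform G) (p : prop_atom) :
  In p (atoms (fh_to_ail f)) <-> In p (fatoms f).
Proof. induction f; simpl; rewrite ?in_app_iff; tauto. Qed.

Lemma sat_fh_to_ail {G : Type} (M : model G) (f : fform G) (w : world M) :
  fsat M w f <-> sat M w (fh_to_ail f).
Proof.
  revert w; induction f as [p | a IHa | a IHa b IHb | i a IHa | i a IHa | i a IHa];
    intro w; simpl.
  - tauto.
  - rewrite IHa; tauto.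
  - rewrite IHa IHb; tauto.
  - split; intros Haw p Hp; apply Haw, atoms_fh_to_ail, Hp.
  - split; intros Hinf v Hv; apply IHa, Hinf, Hv.
  - assert (Haw : (forall p, In p (fatoms a) -> aw M i w p) <->
                  (forall p, In p (atoms (fh_to_ail a)) -> aw M i w p)).
    { split; intros H p Hp; apply H, atoms_fh_to_ail, Hp. }
    assert (Hinf : (forall v, sim M i w v -> fsat M v a) <->
                   (forall v, sim M i w v -> sat M v (fh_to_ail a))).
    { split; intros H v Hv; apply IHa, H, Hv. }
    tauto.
Qed.

Section FHBisimulation.
Variables (G : Type) (M N : model G) (Z : world M -> world N -> Prop).
Hypothesis Z_val : forall w w' p, Z w w' -> (val M p w <-> val N p w').
Hypothesis Z_aw : forall w w' i p, Z w w' -> (aw M i w p <-> aw N i w' p).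
Hypothesis Z_forth : forall w w' v i, Z w w' -> sim M i w v ->
  exists v', sim N i w' v' /\ Z v v'.
Hypothesis Z_back : forall w w' v' i, Z w w' -> sim N i w' v' ->
  exists v, sim M i w v /\ Z v v'.

Lemma forall_sim_bisim (i : G) (P : world M -> Prop) (Q : world N -> Prop)
    (w : world M) (w' : world N) :
  Z w w' -> (forall v v', Z v v' -> (P v <-> Q v')) ->
  (forall v, sim M i w v -> P v) <-> (forall v', sim N i w' v' -> Q v').
Proof.
  intros Zww' PQ; split; intros H.
  - intros v' Hv'; destruct (Z_back w w' v' i Zww' Hv') as [v [Hv Zvv']].
    apply (PQ v v' Zvv'), H, Hv.
  - intros v Hv; destruct (Z_forth w w' v i Zww' Hv) as [v' [Hv' Zvv']].
    apply (PQ v v' Zvv'), H, Hv'.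
Qed.

Lemma fsat_bisim (f : fform G) (w : world M) (w' : world N) :
  Z w w' -> (fsat M w f <-> fsat N w' f).
Proof.
  revert w w'; induction f as [p | a IHa | a IHa b IHb | i a IHa | i a IHa | i a IHa];
    intros w w' Zww'; simpl.
  - apply Z_val, Zww'.
  - rewrite (IHa w w' Zww'); tauto.
  - rewrite (IHa w w' Zww') (IHb w w' Zww'); tauto.
  - split; intros Haw p Hp; apply (Z_aw w w' i p Zww'), Haw, Hp.
  - exact (forall_sim_bisim i _ _ w w' Zww' IHa).
  - assert (Haw : (forall p, In p (fatoms a) -> aw M i w p) <->
                  (forall p, In p (fatoms a) -> aw N i w' p)).
    { split; intros H p Hp; apply (Z_aw w w' i p Zww'), H, Hp. }
    rewrite Haw (forall_sim_bisim i _ _ w w' Zww' IHa); tauto.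
Qed.

End FHBisimulation.

Lemma equivalence_eq (T : Type) : equivalence T (@eq T).
Proof. constructor; red; intros; subst; auto. Qed.

Definition unaware_model (G W : Type) (w0 : W) (V : prop_atom -> W -> Prop) :
  model G :=
  @Model G W (inhabits w0) (fun _ => @eq W) (fun _ _ _ => False) V
    (fun _ => equivalence_eq W) (fun _ _ _ _ _ => iff_refl False).

Lemma aeq_unaware (G W : Type) (w0 : W) (V : prop_atom -> W -> Prop) (i : G)
    (w v : W) :
  @aeq G (unaware_model G W w0 V) i w v.
Proof. split; intro p; cbn; tauto. Qed.

Definition one_world_model (G : Type) : model G :=
  unaware_model G unit tt (fun _ _ => True).

Definition two_world_model (G : Type) : model G :=
  unaware_model G bool true (fun _ b => b = true).

Lemma fsat_two_world_one_world (G : Type) (f : fform G) :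
  fsat (two_world_model G) (true : world (two_world_model G)) f <->
  fsat (one_world_model G) (tt : world (one_world_model G)) f.
Proof.
  apply (fsat_bisim G (two_world_model G) (one_world_model G) (fun b _ => b = true));
    cbn; try reflexivity.
  - intros w w' p Hw; tauto.
  - intros w w' v i Hw <-; exists w'; auto.
  - intros w w' v' i Hw <-; exists w; auto.
Qed.

Theorem theorem1 (G : finType) (hG : inhabited G) :
  (forall phi : fform G, exists psi : form G,
      forall (M : model G) (w : world M), fsat M w phi <-> sat M w psi) /\
  ~ (forall psi : form G, exists phi : fform G,
      forall (M : model G) (w : world M), sat M w psi <-> fsat M w phi).
Proof.
  split.
  - intro phi; exists (fh_to_ail phi); intros M w; apply sat_fh_to_ail.
  - intro definable; destruct hG as [i].
    destruct (definable (BoxA i (Atom 0))) as [phi Hphi].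
    assert (Hone : sat (one_world_model G) (tt : world (one_world_model G))
                       (BoxA i (Atom 0))).
    { cbn; auto. }
    assert (Htwo : ~ sat (two_world_model G) (true : world (two_world_model G))
                         (BoxA i (Atom 0))).
    { intro Hbox; discriminate (Hbox false (aeq_unaware _ _ _ _ i _ _)). }
    apply Htwo, Hphi, fsat_two_world_one_world, Hphi, Hone.
Qed.
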